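(* (a) Let $A$ be a set with $1\leq|A|\leq\omega$, and for each $\alpha\in A$ let $\mathbf{F}(\alpha)$ be a $\pi$-tree on a topological space $X_\alpha$. Suppose that for each $\alpha\in A$ there is $\gamma_\alpha\subseteq\mathcal{P}(\omega)$ such that $|\gamma_\alpha|\leq\omega$, $\gamma_\alpha$ has the finite intersection property, and $\gamma_\alpha\gg\mathrm{Rise}_{\mathbf{F}(\alpha)}(X_\alpha)$. Then the Tychonoff product $\prod_{\alpha\in A}X_\alpha$ has a $\pi$-tree. (b) Suppose, in addition to the hypotheses of (a), that $\mathbf{G}$ is a $\pi$-tree on a topological space $Y$ and $\mathrm{Rise}_{\mathbf{G}}(Y)$ has the finite intersection property. Then the Tychonoff product $Y\times\prod_{\alpha\in A}X_\alpha$ has a $\pi$-tree.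
   Context: A family has the finite intersection property if every finite nonempty subfamily has nonempty intersection. Neighbourhoods are not necessarily open. $\omega=\{0,1,2,\dots\}$, ${}^{<\omega}\omega$ is the set of finite sequences of natural numbers. A tree is a strict partial order in which the set of predecessors of every node is well-ordered; $\mathrm{height}(x)$ is the ordinal isomorphic to the set of predecessors of $x$; a branch is a maximal chain; $\mathrm{sons}(x)$ is the set of immediate successors of $x$; $0$ denotes the least node. A foliage tree is a pair $\mathbf{F}=(T,l)$ with $T$ a tree (skeleton) and $l$ a function on its nodes, $\mathbf{F}_x:=l(x)$; tree notions apply via the skeleton. $\mathrm{shoot}_{\mathbf{F}}(v)=\{\bigcup_{x\in C}\mathbf{F}_x: C\text{ a cofinite subset of }\mathrm{sons}_{\mathbf{F}}(v)\}$; $\mathrm{scope}_{\mathbf{F}}(p)=\{x:p\in\mathbf{F}_x\}$. For families $\gamma,\delta$ of sets, $\gamma\gg\delta$ means every nonempty $D\in\delta$ contains some nonempty $G\in\gamma$. $\mathrm{rise}_{\mathbf{F}}(p,U)=\{\mathrm{height}_{\mathbf{F}}(v): v\in\mathrm{scope}_{\mathbf{F}}(p),\ \mathrm{shoot}_{\mathbf{F}}(v)\gg\{U\}\}$; $\mathrm{Rise}_{\mathbf{F}}(X)=\{\mathrm{rise}_{\mathbf{F}}(p,U):p\in X,\ U\text{ a neighbourhood of }p\text{ in }X\}$. $\mathbf{F}$ is locally strict if each non-maximal leaf $\mathbf{F}_x$ is the disjoint union of $\mathbf{F}_s$, $s\in\mathrm{sons}(x)$; has strict branches if it has a node and for each branch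 $B$, $\bigcap_{x\in B}\mathbf{F}_x$ is a singleton; is open in $X$ if all leaves are open in $X$; is a foliage $\omega,\omega$-tree if its skeleton is order-isomorphic to $({}^{<\omega}\omega,\subsetneq)$. A Baire foliage tree on $X$ is an open in $X$, locally strict foliage $\omega,\omega$-tree with strict branches and $\mathbf{F}_{0_{\mathbf{F}}}=X$. $\mathbf{F}$ grows into $X$ if for every $p\in X$ and neighbourhood $U$ of $p$ there is $z\in\mathrm{scope}_{\mathbf{F}}(p)$ with $\mathrm{shoot}_{\mathbf{F}}(z)\gg\{U\}$. A $\pi$-tree on $X$ is a Baire foliage tree on $X$ that grows into $X$; a space has a $\pi$-tree if there is a $\pi$-tree on it. *)

From HB Require Import structures.
From mathcomp Require Import all_boot all_order.
From mathcomp Require Import all_classical.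
From mathcomp Require Import topology.
Set Implicit Arguments. Unset Strict Implicit. Unset Printing Implicit Defensive.
Local Open Scope classical_set_scope.

(* Foliage omega,omega-trees: the skeleton is taken to be ({}^{<omega}omega, strict
   prefix order), nodes are [seq nat]; a foliage tree on T is the leaf function. *)
Definition foliage (T : Type) := seq nat -> set T.

Definition sons (v : seq nat) : set (seq nat) := [set w | exists n, w = rcons v n].

(* height of a node = order type of its predecessors = its length *)
Definition height (v : seq nat) : nat := size v.

Definition chain (C : set (seq nat)) : Prop :=
  forall x y, C x -> C y -> prefix x y \/ prefix y x.
Definition branch (B : set (seq nat)) : Prop :=
  chain B /\ forall C, chain C -> B `<=` C -> C = B.

Section Foliage.
Context {T : topologicalType}.
Implicit Types (F : foliage T).

Definition locally_strict F : Prop :=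
  forall x, F x = \bigcup_(s in sons x) F s /\
    (forall s t, sons x s -> sons x t -> s <> t -> F s `&` F t = set0).

Definition strict_branches F : Prop :=
  forall B, branch B -> exists p : T, \bigcap_(x in B) F x = [set p].

Definition open_foliage F : Prop := forall x, open (F x).

Definition baire_foliage_tree F : Prop :=
  [/\ open_foliage F, locally_strict F, strict_branches F & F [::] = setT].

Definition shoot F (v : seq nat) : set (set T) :=
  [set \bigcup_(x in C) F x | C in
     [set C : set (seq nat) | C `<=` sons v /\ finite_set (sons v `\` C)]].

Definition scope F (p : T) : set (seq nat) := [set x | F x p].

End Foliage.

Definition gg {U : Type} (gamma delta : set (set U)) : Prop :=
  forall D, delta D -> D !=set0 -> exists G, [/\ gamma G, G !=set0 & G `<=` D].

Section Rise.
Context {T : topologicalType}.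
Implicit Types (F : foliage T).

Definition rise F (p : T) (U : set T) : set nat :=
  [set height v | v in [set v | scope F p v /\ gg (shoot F v) [set U]]].

Definition Rise F : set (set nat) :=
  [set R | exists (p : T) (U : set T), nbhs p U /\ R = rise F p U].

Definition grows_into F : Prop :=
  forall (p : T) (U : set T), nbhs p U ->
    exists z, scope F p z /\ gg (shoot F z) [set U].

Definition pi_tree F : Prop := baire_foliage_tree F /\ grows_into F.

End Rise.

Definition has_pi_tree (T : topologicalType) : Prop := exists F : foliage T, pi_tree F.

Definition fip {U : Type} (gamma : set (set U)) : Prop :=
  forall D : set (set U), finite_set D -> D !=set0 -> D `<=` gamma ->
    \bigcap_(S in D) S !=set0.

From HB Require Import structures.
From mathcomp Require Import all_boot all_order.
From mathcomp Require Import all_classical.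
From mathcomp Require Import topology.
From mathcomp Require Import zify.
From Stdlib Require List.
Set Implicit Arguments. Unset Strict Implicit. Unset Printing Implicit Defensive.
Local Open Scope classical_set_scope.

(* A space Z has a pi-tree as soon as there is a bijection Phi : Z -> omega^omega under which
   cylinders pull back to open sets and every neighbourhood of a point p contains the pullbacks
   of all but finitely many one-step extensions of some initial segment of Phi p: the pullbacks
   of the cylinders are then the leaves of a pi-tree.  Conversely, the leaves of a pi-tree on X
   containing x spell out an address of x, and x |-> address gives such a bijection.
   For a countable product, the addresses of the factors are interleaved stage by stage:
   stage j holds, for each of the first j factors, the address entries between levels mu j and
   mu (j+1), where mu is increasing and eventually enters every member of Rise (such a mu exists
   because gamma is countable, has the finite intersection property and refines Rise).  Each
   stage is recoded so that its first entry is its minimum; hence extending the first j stages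
   by a large number forces a large successor at level mu j in every factor involved, and
   mu j lies in the rise of the prescribed neighbourhood.  One factor may instead be read at
   level j itself, because its rise sets are unbounded. *)

Section Prefix.
Variable T : eqType.
Implicit Types (s t : seq T) (f g : nat -> T).

Lemma prefix_size_eq s t : prefix s t -> size t <= size s -> s = t.
Proof. by rewrite prefixE => /eqP sE ts; rewrite -sE take_oversize. Qed.

Lemma prefix_nth x0 s t i : prefix s t -> i < size s -> nth x0 s i = nth x0 t i.
Proof. by rewrite prefixE => /eqP sE si; rewrite -sE nth_take. Qed.

Lemma take_mkseq f k n : k <= n -> take k (mkseq f n) = mkseq f k.
Proof.
move=> kn; apply: (@eq_from_nth _ (f 0)); first by rewrite size_takel ?size_mkseq.
move=> i; rewrite size_takel ?size_mkseq // => ik.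
by rewrite nth_take // !nth_mkseq // (leq_trans ik kn).
Qed.

Lemma prefix_mkseq f m n : m <= n -> prefix (mkseq f m) (mkseq f n).
Proof. by move=> mn; rewrite prefixE size_mkseq take_mkseq. Qed.

Lemma mkseqD f m n : mkseq f (m + n) = mkseq f m ++ mkseq (fun i => f (m + i)) n.
Proof.
apply: (@eq_from_nth _ (f 0)); first by rewrite size_cat !size_mkseq.
move=> i; rewrite size_mkseq => imn; rewrite nth_cat size_mkseq nth_mkseq //.
by case: ltnP => im; rewrite nth_mkseq ?subnKC // ltn_subLR.
Qed.

Lemma mkseq_funext f g : (forall n, mkseq f n = mkseq g n) -> f = g.
Proof. by move=> fg; apply: funext => n; have := fg n.+1; rewrite !mkseqS => /rcons_inj[]. Qed.

End Prefix.

Definition branch_of (s : nat -> nat) : set (seq nat) := [set v | v = mkseq s (size v)].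

Lemma branch_of_branch s : branch (branch_of s).
Proof.
split=> [x y -> ->|C chC sC].
  by case: (leqP (size x) (size y)) => xy; [left|right];
    apply: prefix_mkseq; rewrite ?size_mkseq // ltnW.
apply/seteqP; split=> // c Cc /=.
have Cs : C (mkseq s (size c)) by apply: sC; rewrite /branch_of /= size_mkseq.
by have [cs|sc] := chC _ _ Cc Cs; [|apply/esym];
  apply: prefix_size_eq; rewrite // size_mkseq.
Qed.

Lemma branch_absorb B c : branch B ->
  (forall b, B b -> prefix b c \/ prefix c b) -> B c.
Proof.
move=> [chB maxB] cB.
have chBc : chain (B `|` [set c]).
  move=> x y [Bx|->] [By|->]; [exact: chB | exact: cB | | left; exact: prefix_refl].
  by case: (cB y By); [right|left].
by rewrite -(maxB _ chBc (@subsetUl _ _ _)); right.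
Qed.

Lemma branch_unbounded B n : branch B -> exists2 b, B b & n < size b.
Proof.
move=> brB; apply: contrapT => noB.
have Bsize b : B b -> size b <= n.
  by move=> Bb; rewrite leqNgt; apply/negP => nb; apply: noB; exists b.
pose P k := `[< exists2 b, B b & size b = k >].
have B0 : B [::] by apply: branch_absorb => // b _; right; exact: prefix0s.
have exP : exists k, P k by exists 0; apply/asboolP; exists [::].
have ubP k : P k -> k <= n by move=> /asboolP[b Bb <-]; exact: Bsize.
case: (ex_maxnP exP ubP) => k /asboolP[b Bb bk] kmax.
have Bb0 : B (rcons b 0).
  apply: branch_absorb => // x Bx; left.
  have [xb|bx] := brB.1 _ _ Bx Bb; first exact: prefix_trans xb (prefix_rcons _ _).
  suff -> : x = b by exact: prefix_rcons.
  apply/esym/prefix_size_eq => //; rewrite bk; apply: kmax; apply/asboolP; by exists x.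
suff /kmax : P (size (rcons b 0)) by rewrite size_rcons bk ltnn.
by apply/asboolP; exists (rcons b 0).
Qed.

Lemma branchP B : branch B -> exists s, B = branch_of s.
Proof.
move=> brB; pose b n := xget [::] [set b | B b /\ n < size b].
have bP n : B (b n) /\ n < size (b n).
  rewrite /b; case: xgetP => // /(_ _) noB; exfalso.
  by have [c Bc nc] := branch_unbounded n brB; exact: noB c (conj Bc nc).
pose s n := nth 0 (b n) n.
have onB v : B v -> v = mkseq s (size v).
  move=> Bv; apply: (@eq_from_nth _ 0); first by rewrite size_mkseq.
  move=> i iv; rewrite nth_mkseq //; have [Bbi ibi] := bP i.
  by have [vb|bv] := brB.1 _ _ Bv Bbi; [exact: prefix_nth | apply/esym/prefix_nth].
exists s; apply/seteqP; split=> v; first exact: onB.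
move=> vE; apply: branch_absorb => // c Bc; rewrite vE (onB _ Bc).
by case: (leqP (size c) (size v)) => cv; [left|right];
  apply: prefix_mkseq; rewrite ?size_mkseq // ltnW.
Qed.

Lemma cofinite_sons_rcons (z : seq nat) (C : set (seq nat)) :
  finite_set (sons z `\` C) -> \forall n \near \oo, C (rcons z n).
Proof.
move=> /finite_seqP[l lE]; exists (\sum_(w <- l) last 0 w).+1 => // n Kn /=.
apply: contrapT => nC.
have : (sons z `\` C) (rcons z n) by split => //; exists n.
rewrite lE /= => nl.
have : last 0 (rcons z n) <= \sum_(w <- l) last 0 w.
  by rewrite (big_rem _ nl) /= leq_addr.
by rewrite last_rcons leqNgt Kn.
Qed.

Definition cyl (v : seq nat) : set (nat -> nat) := [set s | mkseq s (size v) = v].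

Lemma cyl_rcons v n s : cyl (rcons v n) s <-> cyl v s /\ s (size v) = n.
Proof.
rewrite /cyl /= size_rcons mkseqS; split; first by move/rcons_inj => [-> ->].
by move=> [-> ->].
Qed.

Lemma cyl_mkseq s n : cyl (mkseq s n) s.
Proof. by rewrite /cyl /= size_mkseq. Qed.

Section Chart.
Variables (Z : topologicalType) (Phi : Z -> nat -> nat).
Hypothesis Phi_inj : injective Phi.
Hypothesis Phi_surj : forall s, exists z, Phi z = s.
Hypothesis Phi_open : forall v, open (Phi @^-1` cyl v).
Hypothesis Phi_grow : forall p U, nbhs p U -> exists L K,
  forall n, K <= n -> Phi @^-1` cyl (rcons (mkseq (Phi p) L) n) `<=` U.

Definition chart_foliage : foliage Z := fun v => Phi @^-1` cyl v.

Lemma chart_locally_strict : locally_strict chart_foliage.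
Proof.
move=> x; split.
  apply/seteqP; split=> [z xz|z [_ [n ->]] /cyl_rcons[] //].
  by exists (rcons x (Phi z (size x))); [exists (Phi z (size x)) | apply/cyl_rcons].
move=> _ _ [n ->] [m ->] nm; apply/seteqP; split=> // z [].
by move=> /cyl_rcons[_ zn] /cyl_rcons[_ zm]; apply: nm; rewrite -zn -zm.
Qed.

Lemma chart_strict_branches : strict_branches chart_foliage.
Proof.
move=> B /branchP[s ->]; have [p ps] := Phi_surj s.
exists p; apply/seteqP; split=> [z zB|z -> v vE].
  apply: Phi_inj; rewrite ps; apply: mkseq_funext => n.
  have := zB (mkseq s n); rewrite /branch_of /= size_mkseq /chart_foliage /cyl /=.
  by rewrite size_mkseq; apply.
by rewrite /chart_foliage /= ps vE; exact: cyl_mkseq.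
Qed.

Lemma chart_grows_into : grows_into chart_foliage.
Proof.
move=> p U /Phi_grow[L [K KU]]; pose z := mkseq (Phi p) L.
exists z; split; first exact: cyl_mkseq.
move=> _ -> _; pose C := [set w | exists2 n, K <= n & w = rcons z n].
exists (\bigcup_(w in C) chart_foliage w); split.
- exists C => //; split; first by move=> _ [n _ ->]; exists n.
  apply: (@sub_finite_set _ _ (rcons z @` `I_K)); last exact/finite_image/finite_II.
  move=> _ [[n ->] nC]; exists n => //; rewrite /= ltnNge; apply/negP => Kn.
  by apply: nC; exists n.
- have [q qs] := Phi_surj (nth 0 (rcons z K)).
  by exists q, (rcons z K); [exists K | rewrite /chart_foliage /cyl /= qs mkseq_nth].
- by move=> y [_ [n Kn ->]]; exact: KU.
Qed.

Lemma chart_pi_tree : pi_tree chart_foliage.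
Proof.
split; last exact: chart_grows_into.
split; [exact: Phi_open | exact: chart_locally_strict | exact: chart_strict_branches |].
by apply/seteqP; split.
Qed.

End Chart.

Section Address.
Variables (T : topologicalType) (F : foliage T).
Hypothesis bF : baire_foliage_tree F.

Definition next_index (v : seq nat) (x : T) : nat := xget 0 [set k | F (rcons v k) x].

Fixpoint address_prefix (x : T) (n : nat) : seq nat :=
  if n is n'.+1 then rcons (address_prefix x n') (next_index (address_prefix x n') x)
  else [::].

Definition address (x : T) (n : nat) : nat := next_index (address_prefix x n) x.

Lemma address_prefixE x n : address_prefix x n = mkseq (address x) n.
Proof. by elim: n => [|n IH] //=; rewrite mkseqS -IH. Qed.

Lemma leaf_address x n : F (mkseq (address x) n) x.
Proof.
have [_ lsF _ F0] := bF; rewrite -address_prefixE.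
elim: n => [|n IH] /=; first by rewrite F0.
rewrite /next_index; case: xgetP => // /(_ _) noson; exfalso.
by move: IH; rewrite (lsF _).1 => -[_ [k ->] xk]; exact: noson k xk.
Qed.

Lemma leaf_address_uniq x v : F v x -> v = mkseq (address x) (size v).
Proof.
have [_ lsF _ _] := bF; elim/last_ind: v => [//|v k IH] xvk.
have /IH vE : F v x by rewrite (lsF v).1; exists (rcons v k) => //; exists k.
rewrite size_rcons mkseqS -vE; congr rcons; apply: contrapT => kx.
have := leaf_address x (size v).+1; rewrite mkseqS -vE => xva.
have disj : F (rcons v k) `&` F (rcons v (address x (size v))) = set0.
  by apply: (lsF v).2; [exists k | exists (address x (size v)) | move/rcons_inj => [] /kx].
suff : set0 x by [].
by rewrite -disj.
Qed.

Lemma leaf_addressP x v : F v x <-> cyl v (address x).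
Proof.
split=> [/leaf_address_uniq vE|]; first by rewrite /cyl vE size_mkseq.
by rewrite /cyl => <-; exact: leaf_address.
Qed.

Lemma branch_leaves_singleton s : exists p, \bigcap_(v in branch_of s) F v = [set p].
Proof. by have [_ _ sbF _] := bF; apply: sbF; exact: branch_of_branch. Qed.

Lemma address_inj : injective address.
Proof.
move=> x y xy; have [p pE] := branch_leaves_singleton (address x).
have onB z : address z = address x -> (\bigcap_(v in branch_of (address x)) F v) z.
  by move=> zx v /= vE; apply/leaf_addressP; rewrite /cyl /= zx -vE.
by have := onB x erefl; have := onB y (esym xy); rewrite pE /= => -> ->.
Qed.

Lemma address_surj s : exists x, address x = s.
Proof.
have [p pE] := branch_leaves_singleton s; exists p; apply: mkseq_funext => n.
have : (\bigcap_(v in branch_of s) F v) p by rewrite pE.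
move=> /(_ (mkseq s n)); rewrite /branch_of /= size_mkseq => /(_ erefl).
by move/leaf_addressP; rewrite /cyl size_mkseq.
Qed.

Lemma leaf_nonempty v : F v !=set0.
Proof.
have [x xv] := address_surj (nth 0 v); exists x.
by apply/leaf_addressP; rewrite /cyl /= xv mkseq_nth.
Qed.

Lemma address_locally_constant x h : nbhs x [set y | address y h = address x h].
Proof.
have [oF _ _ _] := bF; apply: (@filterS _ _ _ (F (mkseq (address x) h.+1))).
  move=> y /leaf_addressP; rewrite /cyl size_mkseq => /(congr1 (nth 0 ^~ h)).
  by rewrite !nth_mkseq.
by apply: open_nbhs_nbhs; split; [exact: oF | exact: leaf_address].
Qed.

Lemma subset_rise p U V : U p -> U `<=` V -> rise F p U `<=` rise F p V.
Proof.
move=> Up UV _ [v [pv gv] <-]; exists v => //; split=> // _ -> _.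
have [G [shG G0 GU]] := gv U erefl (ex_intro _ p Up).
by exists G; split => //; exact: subset_trans GU UV.
Qed.

Lemma rise_tail p U h : U p -> rise F p U h ->
  \forall n \near \oo, F (rcons (mkseq (address p) h) n) `<=` U.
Proof.
move=> Up [v [pv gv] <-].
have [_ [[C [_ cofC] <-] _ GU]] := gv U erefl (ex_intro _ p Up).
apply: filterS (cofinite_sons_rcons cofC) => n Cn y vy; apply: GU.
by exists (rcons v n) => //; rewrite (leaf_address_uniq pv).
Qed.

Lemma rise_ge p U N h : U p -> U `<=` F (mkseq (address p) N) -> rise F p U h -> N <= h.
Proof.
move=> Up UF /(rise_tail Up)[K _ KU]; rewrite leqNgt; apply/negP => hN.
pose n := maxn K (address p h).+1.
have [q qn] := leaf_nonempty (rcons (mkseq (address p) h) n).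
have /UF/leaf_addressP/(congr1 (nth 0 ^~ h)) := KU n (leq_maxl K _) _ qn.
move: qn => /leaf_addressP/cyl_rcons[_]; rewrite !size_mkseq !nth_mkseq // => ->.
by move=> nE; move: (leq_maxr K (address p h).+1); rewrite -/n nE ltnn.
Qed.

Hypothesis Fgrows : grows_into F.

Lemma rise_unbounded p U N : nbhs p U -> exists2 h, N <= h & rise F p U h.
Proof.
have [oF _ _ _] := bF; move=> pU.
have pUN : nbhs p (U `&` F (mkseq (address p) N)).
  by apply: filterI => //; apply: open_nbhs_nbhs; split; [exact: oF | exact: leaf_address].
have UNp : (U `&` F (mkseq (address p) N)) p by apply: nbhs_singleton.
have [z [pz gz]] := Fgrows pUN.
have hz : rise F p (U `&` F (mkseq (address p) N)) (height z) by exists z.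
exists (height z); first by apply: rise_ge hz => // ? [].
by apply: subset_rise hz => // ? [].
Qed.

Lemma Rise_nonempty R : Rise F R -> R !=set0.
Proof. by move=> [p [U [pU ->]]]; have [h _ hR] := rise_unbounded 0 pU; exists h. Qed.

Lemma Rise_above N : exists R, [/\ Rise F R, R !=set0 & forall h, R h -> N <= h].
Proof.
have [oF _ _ _] := bF; have [p _] := address_surj (fun=> 0).
have pU : nbhs p (F (mkseq (address p) N)).
  by apply: open_nbhs_nbhs; split; [exact: oF | exact: leaf_address].
pose R := rise F p (F (mkseq (address p) N)).
have RR : Rise F R by exists p, (F (mkseq (address p) N)).
exists R; split=> //; first exact: Rise_nonempty.
by move=> h; apply: rise_ge => //; exact: leaf_address.
Qed.

End Address.

Lemma countable_enum (T : choiceType) (A : set T) (x0 : T) : countable A -> A x0 ->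
  exists g : nat -> T, (forall n, A (g n)) /\ forall x, A x -> exists n, g n = x.
Proof.
move=> /countable_injP[f finj] Ax0; pose g n := xget x0 [set x | A x /\ f x = n].
exists g; split=> [n|x Ax]; first by rewrite /g; case: xgetP => [? _ []|].
exists (f x); rewrite /g; case: xgetP => [y _ [Ay fy]|/(_ x)/not_andP[] //].
by apply: finj; rewrite ?inE.
Qed.

Lemma increasing_selection (I : nat -> set nat) :
  (forall k N, exists2 m, I k m & N <= m) ->
  exists mu : nat -> nat, (forall k, mu k < mu k.+1) /\ forall k, I k (mu k).
Proof.
move=> Iunb; pose pick k N := xget 0 [set m | I k m /\ N <= m].
have pickP k N : I k (pick k N) /\ N <= pick k N.
  rewrite /pick; case: xgetP => // /(_ _) noI; exfalso.
  by have [m Ikm Nm] := Iunb k N; exact: noI m (conj Ikm Nm).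
pose fix mu k := if k is k'.+1 then pick k (mu k').+1 else pick 0 0.
by exists mu; split=> [k|[|k]]; [exact: (pickP _ _).2 | exact: (pickP _ _).1 ..].
Qed.

Lemma fip_diagonal (gam : set (set nat)) : countable gam -> fip gam ->
  (forall N, exists2 G, gam G & forall m, G m -> N <= m) ->
  exists mu : nat -> nat, (forall k, mu k < mu k.+1) /\
    forall G, gam G -> \forall k \near \oo, G (mu k).
Proof.
move=> gamc gamfip above; have [G0 gamG0 _] := above 0.
have [g [gam_g g_onto]] := countable_enum gamc gamG0.
pose I k := \bigcap_(j in `I_k.+1) g j.
have Iunb k N : exists2 m, I k m & N <= m.
  have [G gamG GN] := above N; have [j gj] := g_onto _ gamG.
  have [m mI] : \bigcap_(G in g @` `I_(maxn k j).+1) G !=set0.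
    apply: gamfip; [exact/finite_image/finite_II | by exists (g 0), 0 | by move=> _ [i _ <-]].
  exists m => [i ik|]; first by apply: mI; exists i => //; move: ik; rewrite /=; lia.
  by apply: GN; rewrite -gj; apply: mI; exists j => //; rewrite /= ltnS leq_maxr.
have [mu [mu_lt muI]] := increasing_selection Iunb.
exists mu; split=> // G /g_onto[j <-].
by exists j => // k jk; apply: muI.
Qed.

Definition Rise_diagonal (T : topologicalType) (F : foliage T) (mu : nat -> nat) : Prop :=
  (forall k, mu k < mu k.+1) /\ forall R, Rise F R -> \forall k \near \oo, R (mu k).

Lemma Rise_sequence (T : topologicalType) (F : foliage T) (gam : set (set nat)) :
  pi_tree F -> countable gam -> fip gam -> gg gam (Rise F) ->
  exists mu, Rise_diagonal F mu.
Proof.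
move=> [bF Fgrows] gamc gamfip gamR.
have above N : exists2 G, gam G & forall m, G m -> N <= m.
  have [R [RR R0 RN]] := Rise_above bF Fgrows N.
  by have [G [gamG _ GR]] := gamR R RR R0; exists G => // m /GR /RN.
have [mu [mu_lt mu_gam]] := fip_diagonal gamc gamfip above.
exists mu; split=> // R RR.
have [G [/mu_gam GJ _ GR]] := gamR R RR (Rise_nonempty bF Fgrows RR).
by apply: filterS GJ => k /GR.
Qed.

(* (a, b) |-> (minn a b, pair_code a b) is a bijection of nat * nat; iterating it, [mincode]
   recodes a list into one of the same length whose head is the minimum. *)
Definition pair_code (a b : nat) : nat :=
  if a <= b then (b - a).*2 else ((a - b).*2).-1.

Definition pair_decode (m c : nat) : nat * nat :=
  if odd c then (m + (c.+1)./2, m) else (m, m + c./2).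

Lemma pair_codeK a b : pair_decode (minn a b) (pair_code a b) = (a, b).
Proof.
rewrite /pair_decode /pair_code; case: leqP => ab.
  by rewrite odd_double /= doubleK; congr pair; lia.
have -> : odd ((a - b).*2).-1 by rewrite -subn1 oddB ?odd_double // double_gt0 subn_gt0.
by rewrite prednK ?double_gt0 ?subn_gt0 // doubleK; congr pair; lia.
Qed.

Lemma pair_decodeK m c :
  minn (pair_decode m c).1 (pair_decode m c).2 = m /\
  pair_code (pair_decode m c).1 (pair_decode m c).2 = c.
Proof.
rewrite /pair_decode /pair_code; have := odd_double_half c; case: (odd c) => /= cE.
  have := odd_double_half c.+1; rewrite /= -cE /= => cSE.
  by case: leqP => ?; split; lia.
by case: leqP => ?; split; lia.
Qed.

Fixpoint mincode (l : seq nat) : seq nat :=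
  if l is x :: l' then
    (if l' is [::] then [:: x]
     else let e := mincode l' in minn x (head 0 e) :: pair_code x (head 0 e) :: behead e)
  else [::].

Fixpoint mindecode_from (m : nat) (r : seq nat) : seq nat :=
  if r is c :: r' then (pair_decode m c).1 :: mindecode_from (pair_decode m c).2 r'
  else [:: m].

Definition mindecode (l : seq nat) : seq nat :=
  if l is m :: r then mindecode_from m r else [::].

Lemma mincode_cons x l : l != [::] -> mincode (x :: l) =
  minn x (head 0 (mincode l)) :: pair_code x (head 0 (mincode l)) :: behead (mincode l).
Proof. by case: l. Qed.

Lemma size_mincode l : size (mincode l) = size l.
Proof.
elim: l => [|x [|y l] IH] //.
by rewrite mincode_cons //; move: IH => /=; rewrite size_behead => ->.
Qed.

Lemma size_mindecode l : size (mindecode l) = size l.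
Proof. by case: l => [|m r] //=; elim: r m => [|c r IH] m //=; rewrite IH. Qed.

Lemma head_mincode_le l x : x \in l -> head 0 (mincode l) <= x.
Proof.
elim: l => [|y [|z l] IH] //=; first by rewrite inE => /eqP ->.
rewrite inE => /orP[/eqP ->|xl]; first exact: geq_minl.
exact: leq_trans (geq_minr _ _) (IH xl).
Qed.

Lemma mincodeK : cancel mincode mindecode.
Proof.
elim=> [|x [|y l] IH] //; rewrite mincode_cons //.
have : size (mincode (y :: l)) = (size l).+1 by rewrite size_mincode.
by move: IH; case: (mincode (y :: l)) => [|m r] //= IH _; rewrite pair_codeK /= IH.
Qed.

Lemma mindecode_fromK m r : mincode (mindecode_from m r) = m :: r.
Proof.
elim: r m => [|c r IH] m //.
rewrite [mindecode_from _ _]/= mincode_cons; last by case: r {IH}.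
by rewrite IH /=; have [-> ->] := pair_decodeK m c.
Qed.

Lemma mindecodeK : cancel mindecode mincode.
Proof. by case=> [|m r] //; exact: mindecode_fromK. Qed.

Lemma mincode_inj : injective mincode.
Proof. exact: can_inj mincodeK. Qed.

Section Interleave.
Variable nu : nat -> nat -> nat.
Hypothesis nu_low : forall n j, j <= n -> nu n j = 0.
Hypothesis nu_homo : forall n, {homo nu n : j k / j <= k}.
Hypothesis nu0_lt : forall j, nu 0 j < nu 0 j.+1.

Definition block (j : nat) : seq (nat * nat) :=
  flatten [seq [seq (n, h) | h <- iota (nu n j) (nu n j.+1 - nu n j)] | n <- iota 0 j.+1].

Lemma mem_block n h j :
  ((n, h) \in block j) = [&& n <= j, nu n j <= h & h < nu n j.+1].
Proof.
have nuS n' : nu n' j <= nu n' j.+1 by exact: nu_homo.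
apply/flatten_mapP/and3P => [[n' + /mapP[h' + [-> ->]]]|[nj jh hj]].
  by rewrite !mem_iota add0n ltnS subnKC ?nuS // => nj /andP[jh hj]; split.
exists n; first by rewrite mem_iota add0n ltnS.
by apply/mapP; exists h => //; rewrite mem_iota jh subnKC ?nuS.
Qed.

Lemma block_uniq j : uniq (block j).
Proof.
rewrite /block; elim: (iota 0 j.+1) (iota_uniq 0 j.+1) => [|n s IH] //= /andP[ns us].
rewrite cat_uniq IH // andbT map_inj_uniq ?iota_uniq //=; last by move=> ? ? [].
apply/hasPn => _ /flatten_mapP[n' n's /mapP[h' _ ->]].
by apply/mapP => -[h _ [nE _]]; move: ns; rewrite -nE n's.
Qed.

Lemma block_unique x j j' : x \in block j -> x \in block j' -> j = j'.
Proof.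
case: x => n h; rewrite !mem_block => /and3P[_ jh hj] /and3P[_ j'h hj'].
apply/eqP; rewrite eqn_leq; apply/andP; split; rewrite leqNgt; apply/negP => jj.
  by have := nu_homo n jj; rewrite leqNgt (leq_ltn_trans jh hj').
by have := nu_homo n jj; rewrite leqNgt (leq_ltn_trans j'h hj).
Qed.

Lemma block_cover n h : (exists j, h < nu n j) -> exists j, (n, h) \in block j.
Proof.
case/ex_minnP => -[|j]; first by rewrite nu_low.
move=> hj jmin; exists j; rewrite mem_block hj andbT.
have -> : nu n j <= h by rewrite leqNgt; apply/negP => /jmin; rewrite ltnn.
rewrite andbT leqNgt; apply/negP => jn.
by move: hj; rewrite nu_low.
Qed.

Lemma block_nonempty j : 0 < size (block j).
Proof.
have : (0, nu 0 j) \in block j by rewrite mem_block leqnn nu0_lt.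
by case: (block j).
Qed.

Definition interleave_upto (w : nat * nat -> nat) (N : nat) : seq nat :=
  flatten [seq mincode (map w (block j)) | j <- iota 0 N].

Definition offset (N : nat) : nat := sumn [seq size (block j) | j <- iota 0 N].

Definition interleave (w : nat * nat -> nat) (t : nat) : nat := nth 0 (interleave_upto w t.+1) t.

Lemma interleave_uptoD w N k : interleave_upto w (N + k) =
  interleave_upto w N ++ flatten [seq mincode (map w (block j)) | j <- iota N k].
Proof. by rewrite /interleave_upto iotaD map_cat flatten_cat. Qed.

Lemma interleave_uptoS w N :
  interleave_upto w N.+1 = interleave_upto w N ++ mincode (map w (block N)).
Proof. by rewrite -addn1 interleave_uptoD /= cats0. Qed.

Lemma offsetS N : offset N.+1 = offset N + size (block N).
Proof. by rewrite /offset -addn1 iotaD map_cat sumn_cat /= addn0. Qed.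

Lemma size_interleave_upto w N : size (interleave_upto w N) = offset N.
Proof.
rewrite size_flatten /shape -map_comp; congr sumn; apply: eq_map => j /=.
by rewrite size_mincode size_map.
Qed.

Lemma offset_ge N : N <= offset N.
Proof. by elim: N => [|N IH] //; rewrite offsetS; have := block_nonempty N; lia. Qed.

Lemma nth_interleave_upto w N M t : N <= M -> t < offset N ->
  nth 0 (interleave_upto w M) t = nth 0 (interleave_upto w N) t.
Proof.
by move=> /subnKC <- tN; rewrite interleave_uptoD nth_cat size_interleave_upto tN.
Qed.

Lemma interleave_nth w N t : t < offset N -> interleave w t = nth 0 (interleave_upto w N) t.
Proof.
move=> tN; have tS : t < offset t.+1 by exact: leq_trans (offset_ge _).
rewrite /interleave -(@nth_interleave_upto w t.+1 (maxn N t.+1)) ?leq_maxr //.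
exact: nth_interleave_upto (leq_maxl _ _) tN.
Qed.

Lemma mkseq_interleave w N : mkseq (interleave w) (offset N) = interleave_upto w N.
Proof.
apply: (@eq_from_nth _ 0); first by rewrite size_mkseq size_interleave_upto.
by move=> t; rewrite size_mkseq => tN; rewrite nth_mkseq // (interleave_nth w tN).
Qed.

Lemma interleave_head w j : interleave w (offset j) = head 0 (mincode (map w (block j))).
Proof.
have jS : offset j < offset j.+1 by rewrite offsetS -{1}[offset j]addn0 ltn_add2l block_nonempty.
rewrite (interleave_nth w jS) interleave_uptoS nth_cat size_interleave_upto ltnn subnn.
by case: (mincode _).
Qed.

Lemma interleave_upto_blocks w w' N : interleave_upto w N = interleave_upto w' N ->
  forall j, j < N -> {in block j, w =1 w'}.
Proof.
elim: N => [|N IH] // + j; rewrite !interleave_uptoS => /eqP.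
rewrite eqseq_cat ?size_interleave_upto // => /andP[/eqP wN /eqP wb].
rewrite ltnS leq_eqVlt => /orP[/eqP ->|]; last exact: IH.
by apply/eq_in_map; exact: mincode_inj.
Qed.

Lemma interleave_inj w w' : interleave w = interleave w' -> forall j, {in block j, w =1 w'}.
Proof.
move=> ww' j; apply: (@interleave_upto_blocks w w' j.+1) => //.
by rewrite -!mkseq_interleave ww'.
Qed.

Lemma interleave_agree w w' t : (forall j, j <= t -> {in block j, w =1 w'}) ->
  interleave w t = interleave w' t.
Proof.
move=> ww'; rewrite /interleave /interleave_upto; congr (nth 0 (flatten _) t).
apply/eq_in_map => j; rewrite mem_iota add0n ltnS => /andP[_ jt].
by congr mincode; apply/eq_in_map; exact: ww'.
Qed.

Lemma interleave_cyl w w' j n :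
  cyl (rcons (mkseq (interleave w) (offset j)) n) (interleave w') ->
  (forall j', j' < j -> {in block j', w' =1 w}) /\ (forall x, x \in block j -> n <= w' x).
Proof.
move=> /cyl_rcons[]; rewrite /cyl /= size_mkseq !mkseq_interleave => ww'.
rewrite interleave_head => <-; split; first exact: interleave_upto_blocks.
by move=> x xj; apply: head_mincode_le; exact: map_f.
Qed.

Lemma interleave_surj s : exists w, interleave w = s.
Proof.
pose blk x := xget 0 [set j | x \in block j].
have blkE x j : x \in block j -> blk x = j.
  move=> xj; rewrite /blk; case: xgetP => [j' _ /= xj'|/(_ j)/(_ xj)//].
  exact: block_unique xj' xj.
pose window j := mkseq (fun i => s (offset j + i)) (size (block j)).
pose w x := nth 0 (mindecode (window (blk x))) (index x (block (blk x))).
have wE j : map w (block j) = mindecode (window j).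
  apply: (@eq_from_nth _ 0); first by rewrite size_map size_mindecode size_mkseq.
  move=> i; rewrite size_map => ij; rewrite (nth_map (0, 0)) // /w (blkE _ j) ?mem_nth //.
  by rewrite index_uniq // block_uniq.
have upto N : interleave_upto w N = mkseq s (offset N).
  by elim: N => [|N IH] //; rewrite interleave_uptoS IH wE mindecodeK offsetS mkseqD.
exists w; apply: funext => t.
by rewrite /interleave upto nth_mkseq // (leq_trans _ (offset_ge _)).
Qed.

End Interleave.

Lemma filter_forall_In (T U : Type) (F : set_system T) (l : seq U) (P : U -> set T) :
  Filter F -> (forall u, List.In u l -> F (P u)) ->
  F [set t | forall u, List.In u l -> P u t].
Proof.
move=> FF; elim: l => [|u l IH] Pl; first by apply: filterS filterT => t _ u [].
apply: filterS (filterI (Pl u (or_introl erefl)) (IH (fun v vl => Pl v (or_intror vl)))).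
by move=> t [Put Plt] v [<-|vl]; [exact: Put | exact: Plt].
Qed.

Lemma In_mem (T : eqType) (x : T) (s : seq T) : x \in s -> List.In x s.
Proof. by elim: s => //= y s IH; rewrite inE => /orP[/eqP ->|/IH]; [left|right]. Qed.

Section ProductChart.
Local Unset Implicit Arguments.
Variables (Z : topologicalType) (I : Type) (X : I -> topologicalType).
Variable pr : forall i, Z -> X i.
Hypothesis pr_cont : forall i, continuous (pr i).
Hypothesis pr_nbhs : forall z U, nbhs z U -> exists (l : seq I) (V : forall i, set (X i)),
  (forall i, nbhs (pr i z) (V i)) /\ forall z', (forall i, List.In i l -> V i (pr i z')) -> U z'.
Hypothesis pr_onto : forall x : (forall i, X i), exists z, forall i, pr i z = x i.
Hypothesis pr_inj : forall z z', (forall i, pr i z = pr i z') -> z = z'.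
Variable F : forall i, foliage (X i).
Hypothesis piF : forall i, pi_tree (F i).
Variables (code : I -> nat) (i0 : I) (mu : I -> nat -> nat).
Hypothesis code_inj : injective code.
Hypothesis code_i0 : code i0 = 0.
Hypothesis mu_diag : forall i, i <> i0 -> Rise_diagonal (F i) (mu i).

Definition code_of (n : nat) : option I :=
  if pselect (exists i, code i = n) is left e then Some (proj1_sig (cid e)) else None.

Lemma code_ofK i : code_of (code i) = Some i.
Proof.
rewrite /code_of; case: pselect => [e|[]]; last by exists i.
by congr Some; case: (cid e) => j /= /code_inj.
Qed.

Lemma code_of_Some n i : code_of n = Some i -> code i = n.
Proof. by rewrite /code_of; case: pselect => // e [<-]; case: (cid e). Qed.

(* At stage [j] factor [i] is read from level [level i j] on; the factor [i0] is read at level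
   [j] itself. *)
Definition level (i : I) (j : nat) : nat := if code i == 0 then j else mu i j.

Definition nu (n j : nat) : nat :=
  if j <= n then 0 else if code_of n is Some i then level i j else 0.

Definition coords (z : Z) (x : nat * nat) : nat :=
  if code_of x.1 is Some i then address (F i) (pr i z) x.2 else 0.

Definition product_chart (z : Z) : nat -> nat := interleave nu (coords z).

Lemma level_lt i j : level i j < level i j.+1.
Proof.
rewrite /level -code_i0; case: eqP => // ci0.
have ni0 : i <> i0 by move=> iE; apply: ci0; rewrite iE.
exact: (mu_diag i ni0).1.
Qed.

Lemma level_ge i j : j <= level i j.
Proof. by elim: j => [|j IH] //; exact: leq_ltn_trans IH (level_lt i j). Qed.

Lemma level_i0 j : level i0 j = j.
Proof. by rewrite /level code_i0. Qed.

Lemma level_mu i j : i <> i0 -> level i j = mu i j.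
Proof. by rewrite /level -code_i0 => ni0; case: eqP => // /code_inj. Qed.

Lemma nu_level i j : code i < j -> nu (code i) j = level i j.
Proof. by move=> cij; rewrite /nu code_ofK ifN // -ltnNge. Qed.

Lemma nu_low n j : j <= n -> nu n j = 0.
Proof. by rewrite /nu => ->. Qed.

Lemma nu_homo n : {homo nu n : j k / j <= k}.
Proof.
apply: homo_leq leqnn leq_trans _ => j; rewrite /nu.
case: (code_of n) => [i|]; last by do 2 case: ifP.
case: ifP => jn; case: ifP => jSn //; first by rewrite (ltnW jSn) in jn.
exact: ltnW (level_lt i j).
Qed.

Lemma nu0_lt j : nu 0 j < nu 0 j.+1.
Proof.
have c0 : code_of 0 = Some i0 by rewrite -code_i0 code_ofK.
by rewrite /nu c0 !level_i0; case: j.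
Qed.

Lemma block_used x j : x \in block nu j -> exists i, code i = x.1.
Proof.
case: x => n h; rewrite (mem_block nu_homo) => /and3P[_ _].
rewrite /nu; case E : (code_of n) => [i|]; first by exists i; exact: code_of_Some.
by rewrite if_same.
Qed.

Lemma block_level i j : code i < j -> (code i, level i j) \in block nu j.
Proof.
move=> cij; rewrite (mem_block nu_homo) !nu_level ?(ltnW cij) ?leqnn ?level_lt //.
exact: ltnW.
Qed.

Lemma block_below_level i j j' h : code i < j -> (code i, h) \in block nu j' ->
  h < level i j -> j' < j.
Proof.
move=> cij; rewrite (mem_block nu_homo) => /and3P[_ j'h _] hj.
rewrite ltnNge; apply/negP => jj'; have := leq_trans (nu_homo (code i) _ _ jj') j'h.
by rewrite nu_level // leqNgt hj.
Qed.

Lemma block_code i h : exists j, (code i, h) \in block nu j.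
Proof.
apply: (block_cover nu_low nu_homo); exists (maxn (code i) h).+1.
rewrite nu_level ?ltnS ?leq_maxl //; apply: leq_trans (level_ge _ _).
by rewrite ltnS leq_maxr.
Qed.

Lemma coords_code z i h : coords z (code i, h) = address (F i) (pr i z) h.
Proof. by rewrite /coords code_ofK. Qed.

Lemma coords_locally_constant z x : nbhs z [set z' | coords z' x = coords z x].
Proof.
case: x => n h; rewrite /coords /=; case: (code_of n) => [i|]; last exact: nearW.
exact: pr_cont (address_locally_constant (piF i).1 (pr i z) h).
Qed.

Lemma product_chart_inj : injective product_chart.
Proof.
move=> z z' zz'; apply: pr_inj => i; apply: (address_inj (piF i).1); apply: funext => h.
have [j hj] := block_code i h.
by have := interleave_inj nu_homo nu0_lt zz' hj; rewrite !coords_code.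
Qed.

Lemma product_chart_surj s : exists z, product_chart z = s.
Proof.
have [w <-] := interleave_surj nu_homo nu0_lt s.
have x_ex i : exists x, address (F i) x = fun h => w (code i, h).
  exact: address_surj (piF i).1 _.
pose x i := proj1_sig (cid (x_ex i)); have [z zx] := pr_onto x.
exists z; apply: funext => t; apply: interleave_agree => j _ [n h] /block_used[i /= <-].
by rewrite coords_code zx /x; case: cid => ? /= ->.
Qed.

Lemma product_chart_open v : open (product_chart @^-1` cyl v).
Proof.
rewrite openE /cyl => z /= zv; pose P := flatten [seq block nu j | j <- iota 0 (size v)].
have : nbhs z [set z' | forall x, List.In x P -> coords z' x = coords z x].
  by apply: filter_forall_In => x _; exact: coords_locally_constant.
apply: filterS => z' zz' /=; rewrite -[RHS]zv.
apply: (@eq_from_nth _ 0); first by rewrite !size_mkseq.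
move=> t; rewrite size_mkseq => tv; rewrite !nth_mkseq //.
apply: interleave_agree => j jt x xj; apply/zz'/In_mem/flatten_mapP.
by exists j => //; rewrite mem_iota add0n (leq_ltn_trans jt tv).
Qed.

Lemma exists_common_stage p (l : seq I) (V : forall i, set (X i)) :
  (forall i, nbhs (pr i p) (V i)) ->
  exists j, forall i, List.In i l -> code i < j /\ rise (F i) (pr i p) (V i) (level i j).
Proof.
move=> pV; pose R i := rise (F i) (pr i p) (V i).
have RiseR i : Rise (F i) (R i) by exists (pr i p), (V i).
have [J _ JR] : \forall k \near \oo,
    forall i, List.In i l -> code i < k /\ (i <> i0 -> R i (mu i k)).
  apply: filter_forall_In => i _.
  have ci : \forall k \near \oo, code i < k by exists (code i).+1.
  have Ri : \forall k \near \oo, i <> i0 -> R i (mu i k).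
    have [->|ni0] := pselect (i = i0); first exact: nearW.
    by apply: filterS ((mu_diag i ni0).2 _ (RiseR i)) => k Rk _.
  by apply: filterS (filterI ci Ri) => k [].
have [j Jj Rj] := rise_unbounded (piF i0).1 (piF i0).2 J (pV i0).
exists j => i il; have [cij Rij] := JR j Jj i il; split=> //.
by have [->|ni0] := pselect (i = i0); [rewrite level_i0 | rewrite level_mu //; exact: Rij].
Qed.

Lemma product_chart_cyl_leaf p z' i j n : code i < j ->
  cyl (rcons (mkseq (product_chart p) (offset nu j)) n) (product_chart z') ->
  exists2 m, n <= m & F i (rcons (mkseq (address (F i) (pr i p)) (level i j)) m) (pr i z').
Proof.
move=> cij /(interleave_cyl nu_homo nu0_lt)[below top].
exists (address (F i) (pr i z') (level i j)).
  by rewrite -coords_code; apply: top; exact: block_level.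
apply/(leaf_addressP (piF i).1)/cyl_rcons; rewrite /cyl /= !size_mkseq; split=> //.
apply: (@eq_from_nth _ 0); first by rewrite !size_mkseq.
move=> h; rewrite size_mkseq => hj; rewrite !nth_mkseq //.
have [j' hj'] := block_code i h.
by have := below j' (block_below_level i j j' h cij hj' hj) _ hj'; rewrite !coords_code.
Qed.

Lemma product_chart_grow p U : nbhs p U -> exists L K,
  forall n, K <= n -> product_chart @^-1` cyl (rcons (mkseq (product_chart p) L) n) `<=` U.
Proof.
move=> /pr_nbhs[l [V [pV lVU]]]; have [j lj] := exists_common_stage p l V pV.
have [K _ KV] : \forall n \near \oo, forall i, List.In i l ->
    F i (rcons (mkseq (address (F i) (pr i p)) (level i j)) n) `<=` V i.
  apply: filter_forall_In => i il; apply: (rise_tail (piF i).1) (lj i il).2.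
  exact: nbhs_singleton.
exists (offset nu j), K => n Kn z' pz'; apply: lVU => i il.
have [m nm z'm] := product_chart_cyl_leaf p z' i j n (lj i il).1 pz'.
exact: KV m (leq_trans Kn nm) i il _ z'm.
Qed.

Lemma has_pi_tree_of_coordinates : has_pi_tree Z.
Proof.
exists (chart_foliage product_chart).
exact: chart_pi_tree product_chart_inj product_chart_surj product_chart_open product_chart_grow.
Qed.

End ProductChart.

Lemma proj_continuous_prod (I : Type) (X : I -> topologicalType) (i : I) :
  continuous (fun f : prod_topology X => f i).
Proof.
move=> f V fV; have /cvg_sup/(_ i) : f --> f by exact: cvg_id.
by apply; exact: (@initial_continuous _ _ (fun g : prod_topology X => g i) f V fV).
Qed.

Lemma prod_topology_nbhs (I : Type) (X : I -> topologicalType) (f : prod_topology X) U :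
  nbhs f U -> exists (l : seq I) (V : forall i, set (X i)),
    (forall i, nbhs (f i) (V i)) /\
    forall g : prod_topology X, (forall i, List.In i l -> V i (g i)) -> U g.
Proof.
pose G := [set U : set (prod_topology X) | exists (l : seq I) (V : forall i, set (X i)),
  (forall i, nbhs (f i) (V i)) /\
  forall g : prod_topology X, (forall i, List.In i l -> V i (g i)) -> U g].
have GF : Filter G.
  split.
  - by exists [::], (fun=> setT); split=> // i; exact: filterT.
  - move=> P Q [l1 [V1 [fV1 V1P]]] [l2 [V2 [fV2 V2Q]]].
    exists (l1 ++ l2), (fun i => V1 i `&` V2 i); split=> [i|g gV]; first exact: filterI.
    split; [apply: V1P => i il; case: (gV i (List.in_or_app _ _ _ (or_introl il)))
           |apply: V2Q => i il; case: (gV i (List.in_or_app _ _ _ (or_intror il)))] => //.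
  - by move=> P Q PQ [l [V [fV VP]]]; exists l, V; split=> // g /VP /PQ.
suff fG : nbhs f `<=` G by move=> /fG.
have [_] := @cvg_sup _ _ (fun i => Topological.class
  (initial_topology (fun g : forall i, X i => g i))) G f GF.
apply => i B; rewrite nbhsE => -[_ [[O oO <-] Ofi] OB].
pose sat j := [set x : X j | forall g : prod_topology X, g j = x -> B g].
exists [:: i], (fun j => if `[< j = i >] then sat j else setT); split.
  move=> j; case: asboolP => [ji|_]; last exact: filterT.
  subst j.
  apply: (@filterS _ _ _ O); first by move=> x Ox g gx; apply: OB; rewrite /= gx.
  exact: open_nbhs_nbhs.
move=> g /(_ i (or_introl erefl)); case: asboolP => // _; exact.
Qed.

Lemma fst_continuous (Y W : topologicalType) : continuous (@fst Y W).
Proof.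
move=> z V zV; exists (V, setT) => /=; first by split=> //; exact: filterT.
by move=> [] ? ? [].
Qed.

Lemma snd_continuous (Y W : topologicalType) : continuous (@snd Y W).
Proof.
move=> z V zV; exists (setT, V) => /=; first by split=> //; exact: filterT.
by move=> [] ? ? [].
Qed.

Lemma pair_nbhs (Y W : topologicalType) (z : Y * W) U : nbhs z U ->
  exists P Q, [/\ nbhs z.1 P, nbhs z.2 Q & forall a b, P a -> Q b -> U (a, b)].
Proof.
by move=> [[P Q] [/= zP zQ] PQU]; exists P, Q; split=> // a b Pa Qb; exact: (PQU (a, b)).
Qed.

Section Products.
Local Unset Implicit Arguments.
Variables (A : Type) (X : A -> topologicalType) (F : forall a, foliage (X a)).
Variable gamma : A -> set (set nat).
Hypothesis cA : countable [set: A].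
Hypothesis piF : forall a : A, pi_tree (F a).
Hypothesis gammaP : forall a : A,
  [/\ countable (gamma a), fip (gamma a) & gg (gamma a) (Rise (F a))].

Lemma Rise_diagonals : exists mu : A -> nat -> nat, forall a, Rise_diagonal (F a) (mu a).
Proof.
have /choice[mu muP] : forall a, exists mu, Rise_diagonal (F a) mu.
  by move=> a; have [] := gammaP a; exact: Rise_sequence.
by exists mu.
Qed.

Lemma exists_injective_nat : exists f : A -> nat, injective f.
Proof. by have /countable_injP[f finj] := cA; exists f => x y; apply: finj; rewrite in_setT. Qed.

Lemma prod_topology_has_pi_tree (a0 : A) : has_pi_tree (prod_topology X).
Proof.
have [mu muP] := Rise_diagonals; have [f finj] := exists_injective_nat.
pose code a := if `[< a = a0 >] then 0 else (f a).+1.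
have code_inj : injective code.
  by move=> a b; rewrite /code; do 2 case: asboolP => [->|_] //; move=> [/finj].
apply: (has_pi_tree_of_coordinates (prod_topology X) A X (fun a g => g a) _ _ _ _
  F piF code a0 mu code_inj).
- exact: proj_continuous_prod.
- exact: prod_topology_nbhs.
- by move=> x; exists x.
- by move=> g g' gg'; exact: functional_extensionality_dep.
- by rewrite /code; case: asboolP.
- by move=> a _; exact: muP.
Qed.

Variables (Y : topologicalType) (G : foliage Y).
Hypothesis piG : pi_tree G.

Definition opt_space (o : option A) : topologicalType := if o is Some a then X a else Y.

Definition opt_proj (o : option A) : Y * prod_topology X -> opt_space o :=
  match o with Some a => fun z => z.2 a | None => fun z => z.1 end.

Definition opt_foliage (o : option A) : foliage (opt_space o) :=
  match o with Some a => F a | None => G end.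

Lemma opt_proj_nbhs z U : nbhs z U -> exists (l : seq (option A)) (V : forall o, set (opt_space o)),
  (forall o, nbhs (opt_proj o z) (V o)) /\
  forall z', (forall o, List.In o l -> V o (opt_proj o z')) -> U z'.
Proof.
move=> /pair_nbhs[P [Q [zP zQ PQU]]]; have [l [V [zV VQ]]] := prod_topology_nbhs zQ.
exists (None :: map Some l), (fun o => match o return set (opt_space o) with
  Some a => V a | None => P end); split=> [[a|]|z' z'V]; [exact: zV | exact: zP |].
rewrite [z']surjective_pairing; apply: PQU; first exact: z'V None (or_introl erefl).
by apply: VQ => a al; exact: z'V (Some a) (or_intror (List.in_map _ _ _ al)).
Qed.

Lemma pair_prod_topology_has_pi_tree : has_pi_tree (Y * prod_topology X)%type.
Proof.
have [mu muP] := Rise_diagonals; have [f finj] := exists_injective_nat.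
pose code o := if o is Some a then (f a).+1 else 0.
have code_inj : injective code by move=> [a|] [b|] //= [/finj ->].
apply: (has_pi_tree_of_coordinates (Y * prod_topology X)%type (option A) opt_space opt_proj
  _ opt_proj_nbhs _ _ opt_foliage _ code None (fun o => if o is Some a then mu a else id)
  code_inj).
- case=> [a|] z; last exact: fst_continuous.
  exact: (continuous_comp (@snd_continuous _ _ z) (@proj_continuous_prod _ X a z.2)).

- by move=> x; exists (x None, fun a => x (Some a)); case.
- move=> [y g] [y' g'] yg; congr pair; first exact: (yg None).
  by apply: functional_extensionality_dep => a; exact: (yg (Some a)).
- by case=> [a|] /=; [exact: piF | exact: piG].
- by [].
- by case=> [a|] // _; exact: muP.
Qed.

End Products.

Theorem theorem12 (A : Type) (X : A -> topologicalType)
    (F : forall a : A, foliage (X a)) (gamma : A -> set (set nat)) :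
  [set: A] !=set0 -> countable [set: A] ->
  (forall a, pi_tree (F a)) ->
  (forall a, [/\ countable (gamma a), fip (gamma a) & gg (gamma a) (Rise (F a))]) ->
  has_pi_tree (prod_topology X) /\
  (forall (Y : topologicalType) (G : foliage Y),
     pi_tree G -> fip (Rise G) -> has_pi_tree (Y * prod_topology X)%type).
Proof.
move=> [a0 _] cA piF gammaP; split; first exact: prod_topology_has_pi_tree _ _ _ _ cA piF gammaP a0.
by move=> Y G piG _; exact: pair_prod_topology_has_pi_tree _ _ _ _ cA piF gammaP Y G piG.
Qed.
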